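(* For all positive integers $a,b,c,d$ and every positive integer $t$, $$i((a,b,c,d),t)+i((b,a,d,c),t)=F(a+c,b+d,0,t)+F(a,b,0,t)\,F(c,d,0,t).$$
   Context: For $S,T\subseteq[n]$, write $T\le S$ if $|T|=|S|$ and the $i$-th smallest element of $T$ is at most the $i$-th smallest element of $S$ for each $i$. The Schubert matroid $\mathrm{SM}_n(S)$ is the matroid on $[n]$ with bases $\{T\subseteq[n]:T\le S\}$; $i(M,t)$ is the number of lattice points in the $t$-th dilate of the matroid polytope $\mathrm{conv}\{\sum_{b\in B}e_b: B\text{ a basis of }M\}$. For a sequence $r=(r_1,\dots,r_{2m})$ of integers with $r_1\ge0$, $r_i>0$ for $i\ge2$, let $n=\sum r_i$ and let $S\subseteq[n]$ have indicator vector $(0^{r_1},1^{r_2},\dots,0^{r_{2m-1}},1^{r_{2m}})$ ($x^p$ = $p$ consecutive copies of $x$); $i(r,t):=i(\mathrm{SM}_n(S),t)$. For integers $a,b\ge0$ with $a+b\ge1$, $c\in\mathbb Z$, $t\ge0$: $F(a,b,c,t)=\sum_{j=0}^{a+b}(-1)^j\binom{a+b}{j}\binom{(t+1)(b-j)+a+c-1}{a+b-1}$, with $\binom00=1$ and $\binom NK=0$ if $K<0$ or $N<K$. *)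

From Stdlib Require Rdefinitions.
From HB Require Import structures.
From mathcomp Require Import all_boot all_order all_algebra.
From mathcomp Require Import boolp.
From mathcomp Require Import Rstruct.
Set Implicit Arguments. Unset Strict Implicit. Unset Printing Implicit Defensive.
Import Order.TTheory GRing.Theory Num.Theory.

Notation R := Rdefinitions.R.

(* Ground set [n] is modelled by 'I_n = {0,...,n-1} (shift by one; the
   Gale order is invariant under this shift). *)

Definition sorted_elems (n : nat) (T : {set 'I_n}) : seq nat :=
  sort leq [seq val i | i <- enum T].

Definition gale_le (n : nat) (T S : {set 'I_n}) : bool :=
  (#|T| == #|S|) && all2 leq (sorted_elems T) (sorted_elems S).

Definition schubert_bases (n : nat) (S : {set 'I_n}) : {set {set 'I_n}} :=
  [set T : {set 'I_n} | gale_le T S].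

(* x lies in the t-th dilate of conv{ e_B : B in V }:
   x = sum_B lam_B e_B with lam_B >= 0 and sum_B lam_B = t. *)
Definition in_dilated_hull (n : nat) (V : {set {set 'I_n}}) (t : nat)
    (x : 'I_n -> R) : Prop :=
  exists lam : {set 'I_n} -> R,
    [/\ (forall B, (0 <= lam B)%R),
        (\sum_(B in V) lam B)%R = (t%:R)%R
      & forall i, x i = (\sum_(B in V) lam B * (i \in B)%:R)%R].

(* Every point of that dilate has all coordinates in [0,t]
   (each coordinate is a sum of some of the lam_B), so the lattice points
   are exactly the integer vectors with coordinates in {0,...,t} lying in
   the dilate. *)
Definition lattice_count (n : nat) (V : {set {set 'I_n}}) (t : nat) : nat :=
  #|[set x : {ffun 'I_n -> 'I_t.+1} |
       `[< in_dilated_hull V t (fun i => ((x i : nat)%:R : R)%R) >]]|.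

Definition matroid_ehrhart (n : nat) (V : {set {set 'I_n}}) (t : nat) : nat :=
  lattice_count V t.

(* indicator word (0^{r_1}, 1^{r_2}, 0^{r_3}, ...) of S determined by r *)
Definition indicator (r : seq nat) : seq bool :=
  flatten (mkseq (fun k => nseq (nth 0 r k) (odd k)) (size r)).

Definition schubert_set (r : seq nat) : {set 'I_(sumn r)} :=
  [set i : 'I_(sumn r) | nth false (indicator r) i].

Definition i_r (r : seq nat) (t : nat) : nat :=
  matroid_ehrhart (schubert_bases (schubert_set r)) t.

(* generalized binomial: binom(N,K) = 0 if N < K (in particular if N < 0) *)
Definition binz (N : int) (K : nat) : int :=
  match N with
  | Posz m => ('C(m, K))%:Z
  | Negz _ => 0%R
  end.

Definition F (a b : nat) (c : int) (t : nat) : int :=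
  (\sum_(0 <= j < (a + b).+1)
     (-1) ^+ j * ('C(a + b, j))%:Z *
     binz ((t.+1)%:Z * (b%:Z - j%:Z) + a%:Z + c - 1) (a + b).-1)%R.

From mathcomp Require Import all_boot all_order all_algebra.
From mathcomp Require Import boolp Rstruct zify ring.
Set Implicit Arguments. Unset Strict Implicit. Unset Printing Implicit Defensive.
Import Order.TTheory GRing.Theory Num.Theory.

(* A lattice point of the t-th dilate of the polytope of SM(S) is a vector in
   [0,t]^n of total t|S| whose prefix sums are at least t times the prefix counts
   of S; conversely such a vector splits into t bases of SM(S) by stacking its
   coordinates consecutively on a line and cutting the slots modulo t.  For
   r = (a,b,c,d) only the prefix condition at position a+b matters, and for
   (b,a,d,c) the substitution x -> t - x turns it into the reverse inequality at
   the same position.  Adding the two counts gives all vectors of total t(b+d),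
   plus those whose first a+b entries sum to exactly tb.  Finally, the number of
   vectors in [0,t]^m with a given sum is the alternating sum F: both satisfy the
   recurrence over the first entry, by the hockey-stick identity. *)

(** * The Gale order through prefix counts *)

Lemma count_lt_all_geq y j s : all (leq y) s -> j <= y -> count (fun v => v < j) s = 0.
Proof.
move=> /allP s_ge jy; apply/eqP; rewrite -leqn0 leqNgt -has_count.
by apply/hasPn => v /s_ge yv; rewrite -leqNgt (leq_trans jy yv).
Qed.

Lemma all2_leq_count_lt sT sS : sorted leq sS -> all2 leq sT sS ->
  forall j, count (fun v => v < j) sS <= count (fun v => v < j) sT.
Proof.
elim: sS sT => [|y sS IH] [|x sT] //= sorted_yS /andP[xy leTS] j.
case: (ltnP y j) => [yj|jy].
  by rewrite (leq_ltn_trans xy yj) !add1n ltnS; apply: IH (path_sorted sorted_yS) leTS j.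
by rewrite (count_lt_all_geq (order_path_min leq_trans sorted_yS) jy).
Qed.

Lemma count_lt_all2_leq sT sS : sorted leq sT -> sorted leq sS -> size sT = size sS ->
  (forall j, count (fun v => v < j) sS <= count (fun v => v < j) sT) -> all2 leq sT sS.
Proof.
elim: sT sS => [|x sT IH] [|y sS] //= sorted_xT sorted_yS [] size_TS le_count.
have xy : x <= y.
  rewrite leqNgt; apply/negP => yx; move: (le_count y.+1).
  by rewrite ltnSn ltnS (leqNgt x y) yx /= (count_lt_all_geq (order_path_min leq_trans sorted_xT) yx).
rewrite xy /=; apply: IH (path_sorted sorted_xT) (path_sorted sorted_yS) size_TS _ => j.
move: (le_count j); case: (ltnP y j) => [yj|jy].
  by rewrite (leq_ltn_trans xy yj) !add1n ltnS.
by rewrite (count_lt_all_geq (order_path_min leq_trans sorted_yS) jy).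
Qed.

Definition prefix_card n (A : {set 'I_n}) j := \sum_(i < n | i < j) (i \in A : nat).

Lemma card_big_in n (A : {set 'I_n}) : #|A| = \sum_(i < n) (i \in A : nat).
Proof.
by rewrite -sum1_card big_mkcond /=; apply: eq_bigr => i _; case: (i \in A).
Qed.

Lemma count_lt_sorted_elems n (A : {set 'I_n}) j :
  count (fun v => v < j) (sorted_elems A) = prefix_card A j.
Proof.
rewrite /sorted_elems count_sort count_map -sum1_count big_enum_cond /prefix_card.
rewrite big_mkcond [RHS]big_mkcond; apply: eq_bigr => i _.
by rewrite /=; case: (_ \in _); case: (_ < _).
Qed.

Lemma size_sorted_elems n (A : {set 'I_n}) : size (sorted_elems A) = #|A|.
Proof. by rewrite size_sort size_map -cardE. Qed.

Lemma gale_leP n (T S : {set 'I_n}) :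
  gale_le T S <-> #|T| = #|S| /\ forall j, prefix_card S j <= prefix_card T j.
Proof.
have sorted_elems_sorted (A : {set 'I_n}) : sorted leq (sorted_elems A).
  exact: (sort_sorted leq_total).
rewrite /gale_le; split.
  case/andP => /eqP cardTS leTS; split=> // j; rewrite -!count_lt_sorted_elems.
  exact: all2_leq_count_lt leTS j.
case=> cardTS le_prefix; rewrite cardTS eqxx /=.
apply: count_lt_all2_leq => //; first by rewrite !size_sorted_elems.
by move=> j; rewrite !count_lt_sorted_elems.
Qed.

(** * Lattice points of a dilated Schubert matroid polytope *)

Lemma big_ord_ltS n (F : 'I_n -> nat) j (jn : j < n) :
  \sum_(i < n | i < j.+1) F i = \sum_(i < n | i < j) F i + F (Ordinal jn).
Proof.
rewrite (bigD1 (Ordinal jn)) //= addnC; congr (_ + _); apply: eq_bigl => i.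
by rewrite ltnS leq_eqVlt -(inj_eq val_inj) /=; case: (ltngtP i j).
Qed.

Lemma big_ord_lt_geq n (F : 'I_n -> nat) j : n <= j ->
  \sum_(i < n | i < j) F i = \sum_(i < n) F i.
Proof. by move=> nj; apply: eq_bigl => i; rewrite (leq_trans (ltn_ord i) nj). Qed.

Lemma big_ord_lt_minn n (F : 'I_n -> nat) j :
  \sum_(i < n | i < j) F i = \sum_(i < n | i < minn j n) F i.
Proof. by apply: eq_bigl => i; rewrite leq_min ltn_ord andbT. Qed.

Lemma count_mod_iota_window t m p : m < t -> count (fun k => k %% t == m) (iota p t) = 1.
Proof.
move=> mt; elim: p => [|p IH].
  rewrite (@eq_in_count _ _ (pred1 m)); last first.
    by move=> k; rewrite mem_iota add0n => /andP[_ kt]; rewrite modn_small.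
  by rewrite count_uniq_mem ?iota_uniq // mem_iota mt.
case: t mt IH => // t mt IH.
rewrite -[X in iota p.+1 X]addn1 iotaD count_cat /= addn0 addSnnS modnDr.
by move: IH => /=; rewrite addnC.
Qed.

Lemma count_mod_iota_le1 t m p y : m < t -> y <= t ->
  count (fun k => k %% t == m) (iota p y) <= 1.
Proof.
move=> mt yt; rewrite -(count_mod_iota_window p mt) -(subnKC yt) iotaD count_cat.
exact: leq_addr.
Qed.

Lemma count_mod_iota_mul t m k : m < t ->
  count (fun p => p %% t == m) (iota 0 (t * k)) = k.
Proof.
move=> mt; elim: k => [|k IH]; first by rewrite muln0.
by rewrite mulnS addnC iotaD count_cat IH add0n count_mod_iota_window // addn1.
Qed.

Lemma sum_count_mod t s : 0 < t -> \sum_(m < t) count (fun k => k %% t == m) s = size s.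
Proof.
move=> t_gt0; elim: s => [|p s IH] /=; first by rewrite big1.
rewrite big_split /= IH.
suff -> : \sum_(m < t) (p %% t == m) = 1 by [].
rewrite (bigD1 (Ordinal (ltn_pmod p t_gt0))) //= eqxx big1 // => m.
by move/negPf; rewrite -(inj_eq val_inj) /= eq_sym => ->.
Qed.

Lemma count_iota0_mono (q : pred nat) p p' : p <= p' ->
  count q (iota 0 p) <= count q (iota 0 p').
Proof. by move=> pp'; rewrite -(subnKC pp') iotaD count_cat leq_addr. Qed.

Lemma has_count_le1 T (a : pred T) s : count a s <= 1 -> (has a s : nat) = count a s.
Proof. by rewrite has_count; case: (count a s) => [|[|]]. Qed.

Definition psum n (x : 'I_n -> nat) j := \sum_(i < n | i < j) x i.

Lemma sum_count_iota_psum n (x : 'I_n -> nat) (q : pred nat) j : j <= n ->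
  \sum_(i < n | i < j) count q (iota (psum x i) (x i)) = count q (iota 0 (psum x j)).
Proof.
elim: j => [|j IH] jn; first by rewrite /psum !big_pred0.
rewrite (big_ord_ltS _ jn) IH ?(ltnW jn) //.
by rewrite [in RHS]/psum (big_ord_ltS x jn) iotaD count_cat add0n.
Qed.

(* Coordinate [i] occupies the slots [psum x i, psum x i + x i) of the line;
   [slice_basis t x m] collects the coordinates owning a slot congruent to [m]
   modulo [t]. *)
Definition slice_basis n t (x : 'I_n -> nat) (m : nat) : {set 'I_n} :=
  [set i : 'I_n | has (fun p => p %% t == m) (iota (psum x i) (x i))].

Section SliceBasis.
Variables (n t : nat) (x : 'I_n -> nat).
Hypothesis t_gt0 : 0 < t.
Hypothesis x_le : forall i, x i <= t.

Lemma in_slice_basis i m : m < t ->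
  (i \in slice_basis t x m : nat) = count (fun p => p %% t == m) (iota (psum x i) (x i)).
Proof. by move=> mt; rewrite inE has_count_le1 // count_mod_iota_le1. Qed.

Lemma sum_in_slice_basis i : \sum_(m < t) (i \in slice_basis t x m : nat) = x i.
Proof.
rewrite (eq_bigr _ (fun m _ => in_slice_basis i (ltn_ord m))).
by rewrite sum_count_mod // size_iota.
Qed.

Lemma prefix_card_slice_basis m j : m < t ->
  prefix_card (slice_basis t x m) j =
  count (fun p => p %% t == m) (iota 0 (psum x (minn j n))).
Proof.
move=> mt; rewrite /prefix_card big_ord_lt_minn.
by rewrite (eq_bigr _ (fun i _ => in_slice_basis i mt)) sum_count_iota_psum // geq_minr.
Qed.

Variable S : {set 'I_n}.
Hypothesis sum_x : \sum_i x i = t * #|S|.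
Hypothesis psum_x_ge : forall j, t * prefix_card S j <= psum x j.

Lemma slice_basis_schubert m : m < t -> slice_basis t x m \in schubert_bases S.
Proof.
move=> mt; rewrite inE; apply/gale_leP; split.
  rewrite card_big_in -(big_ord_lt_geq _ (leqnn n)) -/(prefix_card _ n).
  rewrite prefix_card_slice_basis // minnn.
  by rewrite /psum big_ord_lt_geq // sum_x count_mod_iota_mul.
move=> j; rewrite prefix_card_slice_basis //.
have -> : prefix_card S j = prefix_card S (minn j n).
  by rewrite /prefix_card big_ord_lt_minn [in RHS]big_ord_lt_minn -minnA minnn.
rewrite -{1}(count_mod_iota_mul (prefix_card S (minn j n)) mt).
exact: count_iota0_mono.
Qed.

End SliceBasis.

Lemma dilated_hull_schubert_cond n (S : {set 'I_n}) t (x : 'I_n -> nat) :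
  in_dilated_hull (schubert_bases S) t (fun i => ((x i)%:R : R)%R) ->
  \sum_i x i = t * #|S| /\ forall j, t * prefix_card S j <= psum x j.
Proof.
case=> lam [lam_ge0 sum_lam x_lam].
have gale_S B : B \in schubert_bases S ->
    #|B| = #|S| /\ forall j, prefix_card S j <= prefix_card B j.
  by rewrite inE => /gale_leP.
split.
  have sum_xR : ((\sum_i x i)%:R = (t * #|S|)%:R :> R)%R.
    rewrite natr_sum (eq_bigr _ (fun i _ => x_lam i)) exchange_big /=.
    rewrite (eq_bigr (fun B => lam B * #|S|%:R)%R) => [|B SB]; last first.
      by rewrite -mulr_sumr -natr_sum -card_big_in (gale_S B SB).1.
    by rewrite -mulr_suml sum_lam natrM.
  by apply/eqP; rewrite -(eqr_nat R) sum_xR.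
move=> j; rewrite -(ler_nat R) natrM -sum_lam mulr_suml /psum [X in (_ <= X)%R]natr_sum.
rewrite (eq_bigr _ (fun i _ => x_lam i)) exchange_big /=.
apply: ler_sum => B SB; rewrite -mulr_sumr; apply: (ler_wpM2l (lam_ge0 B)).
by rewrite -natr_sum ler_nat; exact: (gale_S B SB).2.
Qed.

Lemma dilated_hull_schubert_slices n (S : {set 'I_n}) t (x : 'I_n -> nat) :
  0 < t -> (forall i, x i <= t) ->
  \sum_i x i = t * #|S| -> (forall j, t * prefix_card S j <= psum x j) ->
  in_dilated_hull (schubert_bases S) t (fun i => ((x i)%:R : R)%R).
Proof.
move=> t_gt0 x_le sum_x psum_x_ge.
have slice_S m : m < t -> slice_basis t x m \in schubert_bases S.
  exact: slice_basis_schubert.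
exists (fun B => ((\sum_(m < t) (B == slice_basis t x m) : nat)%:R : R)%R); split.
- by move=> B; exact: ler0n.
- rewrite -natr_sum exchange_big /=.
  rewrite (eq_bigr (fun _ => 1%N)) => [|m _]; first by rewrite sum1_card card_ord.
  rewrite (bigD1 (slice_basis t x m)) ?slice_S //= eqxx big1 // => B /andP[_ /negPf ->].
  by [].
- move=> i /=.
  rewrite (eq_bigr (fun B => ((\sum_(m < t) (B == slice_basis t x m)) * (i \in B))%N%:R)%R)
    => [|B _]; last by rewrite natrM.
  rewrite -natr_sum; congr (_%:R)%R.
  rewrite (eq_bigr _ (fun B _ => big_distrl _ _ _)) exchange_big /= -(sum_in_slice_basis t_gt0 x_le i).
  apply: eq_bigr => m _.
  rewrite (bigD1 (slice_basis t x m)) ?slice_S //= eqxx mul1n big1 ?addn0 //.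
  by move=> B /andP[_ /negPf ->].
Qed.

(** * Counting lattice points as sequences *)

Fixpoint bounded_seqs t n : seq (seq nat) :=
  if n is n'.+1 then [seq v :: s | v <- iota 0 t.+1, s <- bounded_seqs t n'] else [:: [::]].

Lemma mem_bounded_seqs t n s :
  (s \in bounded_seqs t n) = (size s == n) && all (fun v => v <= t) s.
Proof.
elim: n s => [|n IH] s; first by case: s.
apply/allpairsP/idP => [[[v s'] [v_t s'_in ->]]|].
  by move: v_t s'_in; rewrite mem_iota IH /= eqSS ltnS => -> /andP[-> ->].
case: s => [|v s] // /andP[size_s /andP[v_t s_t]].
by exists (v, s); rewrite mem_iota IH ltnS v_t; split=> //; apply/andP.
Qed.

Lemma uniq_bounded_seqs t n : uniq (bounded_seqs t n).
Proof.
elim: n => // n IH; apply: allpairs_uniq => //; first exact: iota_uniq.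
by move=> [v s] [v' s'] _ _ /= [-> ->].
Qed.

Lemma count_bounded_seqsS t n (P : pred (seq nat)) :
  count P (bounded_seqs t n.+1) =
  \sum_(v < t.+1) count (fun s => P ((v : nat) :: s)) (bounded_seqs t n).
Proof.
have count_big (T : Type) (a : pred T) l : count a l = \sum_(s <- l) (a s : nat).
  by elim: l => [|y l IH]; rewrite ?big_nil ?big_cons //= IH.
rewrite [bounded_seqs t n.+1]/bounded_seqs -/(bounded_seqs t n).
rewrite count_big big_allpairs_dep -(subn0 t.+1) -/(index_iota 0 t.+1) big_mkord.
by apply: eq_bigr => v _; rewrite count_big.
Qed.

Definition ffun_vals n t (x : {ffun 'I_n -> 'I_t.+1}) : seq nat :=
  [seq (x i : nat) | i <- enum 'I_n].

Lemma size_ffun_vals n t (x : {ffun 'I_n -> 'I_t.+1}) : size (ffun_vals x) = n.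
Proof. by rewrite size_map size_enum_ord. Qed.

Lemma nth_ffun_vals n t (x : {ffun 'I_n -> 'I_t.+1}) (i : 'I_n) :
  nth 0 (ffun_vals x) i = x i.
Proof. by rewrite /ffun_vals (nth_map i) ?size_enum_ord // nth_ord_enum. Qed.

Lemma ffun_vals_inj n t : injective (@ffun_vals n t).
Proof.
by move=> x y xy; apply/ffunP => i; apply: val_inj; rewrite /= -!nth_ffun_vals xy.
Qed.

Lemma card_ffun_vals n t (P : pred (seq nat)) :
  #|[set x : {ffun 'I_n -> 'I_t.+1} | P (ffun_vals x)]| = count P (bounded_seqs t n).
Proof.
rewrite cardE /enum_mem size_filter (eq_count (a2 := fun x => P (ffun_vals x))); last first.
  by move=> x; rewrite /= inE.
rewrite -count_map; apply/permP; apply: uniq_perm.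
- by rewrite map_inj_uniq -?enumT ?enum_uniq //; exact: ffun_vals_inj.
- exact: uniq_bounded_seqs.
move=> s; rewrite mem_bounded_seqs.
apply/mapP/idP => [[x _ ->]|/andP[/eqP size_s s_t]].
  rewrite size_ffun_vals eqxx /=; apply/allP => v /mapP [i _ ->].
  by rewrite -ltnS ltn_ord.
have nth_s_t (i : 'I_n) : nth 0 s i < t.+1.
  by rewrite ltnS; apply: (allP s_t); apply: mem_nth; rewrite size_s.
exists [ffun i : 'I_n => inord (nth 0 s i) : 'I_t.+1]; first by rewrite -enumT mem_enum.
apply: (@eq_from_nth _ 0); first by rewrite size_ffun_vals size_s.
move=> i; rewrite size_s => ilt.
by rewrite (nth_ffun_vals _ (Ordinal ilt)) ffunE inordK // (nth_s_t (Ordinal ilt)).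
Qed.

Lemma sum_nth_lt_take n (s : seq nat) j : size s = n ->
  \sum_(i < n | i < j) nth 0 s i = sumn (take j s).
Proof.
move=> <-; elim: s j => [|v s IH] j /=; first by rewrite big_ord0.
case: j => [|j]; first by rewrite big_pred0.
by rewrite big_mkcond big_ord_recl /= -IH [in RHS]big_mkcond.
Qed.

Definition schubert_lattice_seq n (S : {set 'I_n}) t (s : seq nat) :=
  (sumn s == t * #|S|) &&
  all (fun j => t * prefix_card S j <= sumn (take j s)) (iota 0 n.+1).

Lemma lattice_count_schubert n (S : {set 'I_n}) t : 0 < t ->
  lattice_count (schubert_bases S) t =
  count (schubert_lattice_seq S t) (bounded_seqs t n).
Proof.
move=> t_gt0; rewrite /lattice_count -card_ffun_vals; apply: eq_card => x; rewrite !inE.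
pose xn i := (x i : nat).
have xn_le i : xn i <= t by rewrite -ltnS ltn_ord.
have psum_x j : psum xn j = sumn (take j (ffun_vals x)).
  rewrite /psum -(sum_nth_lt_take j (size_ffun_vals x)).
  by apply: eq_bigr => i _; rewrite nth_ffun_vals.
have sum_x : \sum_i xn i = sumn (ffun_vals x).
  by rewrite -(big_ord_lt_geq _ (leqnn n)) -/(psum xn n) psum_x take_oversize ?size_ffun_vals.
apply/asboolP/idP => [/dilated_hull_schubert_cond [sum_xS psum_ge] | /andP[/eqP sum_xS /allP psum_ge]].
  rewrite /schubert_lattice_seq -sum_x sum_xS eqxx andTb.
  by apply/allP => j _; rewrite -psum_x.
apply: dilated_hull_schubert_slices => //; first by rewrite sum_x.
move=> j; have := psum_ge (minn j n); rewrite mem_iota ltnS geq_minr /= => /(_ isT).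
by rewrite -psum_x /psum /prefix_card -!big_ord_lt_minn.
Qed.

(** * Schubert sets with four blocks *)

Lemma size_indicator r : size (indicator r) = sumn r.
Proof.
rewrite /indicator size_flatten /shape /mkseq -map_comp.
rewrite (@eq_map _ _ _ (nth 0 r)) => [|k]; last by rewrite /= size_nseq.
by rewrite -/(mkseq _ _) mkseq_nth.
Qed.

Lemma prefix_card_schubert_set r j :
  prefix_card (schubert_set r) j = count id (take j (indicator r)).
Proof.
rewrite /prefix_card -sumn_count map_take -(@sum_nth_lt_take (sumn r)); last first.
  by rewrite size_map size_indicator.
apply: eq_bigr => i _; rewrite inE (nth_map false) // size_indicator; exact: ltn_ord.
Qed.

Lemma count_take_nseq_cat (b : bool) p s j :
  count id (take j (nseq p b ++ s)) = b * minn j p + count id (take (j - p) s).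
Proof.
rewrite take_cat size_nseq; case: ltnP => jp.
  have -> : j - p = 0 by apply/eqP; rewrite subn_eq0 ltnW.
  by rewrite take_nseq ?(ltnW jp) // count_nseq take0 addn0 mulnC.
by rewrite count_cat count_nseq mulnC.
Qed.

Lemma indicator4 p q u w :
  indicator [:: p; q; u; w] = nseq p false ++ nseq q true ++ nseq u false ++ nseq w true.
Proof. by rewrite /indicator /= cats0. Qed.

Lemma prefix_card_schubert4 p q u w j :
  prefix_card (schubert_set [:: p; q; u; w]) j = minn (j - p) q + minn (j - p - q - u) w.
Proof.
rewrite prefix_card_schubert_set indicator4 !count_take_nseq_cat -[nseq w true]cats0.
by rewrite count_take_nseq_cat /=; lia.
Qed.

Lemma card_schubert4 p q u w : #|schubert_set [:: p; q; u; w]| = q + w.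
Proof.
rewrite card_big_in -(big_ord_lt_geq _ (leqnn _)) -/(prefix_card _ _).
by rewrite prefix_card_schubert4 /=; lia.
Qed.

Lemma sumn_take_bounds t s j k : all (fun v => v <= t) s -> j <= k ->
  sumn (take j s) <= sumn (take k s) <= sumn (take j s) + t * (k - j).
Proof.
move=> s_t jk; rewrite -(subnKC jk) takeD sumn_cat leq_addr /= leq_add2l addKn.
have s'_t : all (fun v => v <= t) (take (k - j) (drop j s)).
  by apply/allP => v /mem_take /mem_drop; exact: (allP s_t).
have sumn_le (s' : seq nat) : all (fun v => v <= t) s' -> sumn s' <= t * size s'.
  by elim: s' => //= v s' IH /andP[vt s'_t']; rewrite mulnS leq_add ?IH.
apply: leq_trans (sumn_le _ s'_t) _; rewrite leq_mul2l size_take.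
by apply/orP; right; case: ltnP.
Qed.

Lemma schubert4_prefix_ge p q u w t s j : all (fun v => v <= t) s ->
  size s = p + q + u + w -> sumn s = t * (q + w) -> t * q <= sumn (take (p + q) s) ->
  j <= p + q + u + w -> t * (minn (j - p) q + minn (j - p - q - u) w) <= sumn (take j s).
Proof.
move=> s_t size_s sum_s take_pq_ge j_n.
have [jp|pj] := leqP j p.
  have -> : minn (j - p) q + minn (j - p - q - u) w = 0 by lia.
  by rewrite muln0.
have [jpq|pqj] := leqP j (p + q).
  have /andP[_ le_pq] := sumn_take_bounds s_t jpq.
  have : t * (minn (j - p) q + (p + q - j)) <= t * q.
    by rewrite leq_mul2l; apply/orP; right; lia.
  have -> : minn (j - p - q - u) w = 0 by lia.
  rewrite addn0 mulnDr => le_q; rewrite -(leq_add2r (t * (p + q - j))).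
  exact: leq_trans le_q (leq_trans take_pq_ge le_pq).
have [jpqu|pquj] := leqP j (p + q + u).
  have /andP[le_j _] := sumn_take_bounds s_t (ltnW pqj).
  have -> : minn (j - p) q + minn (j - p - q - u) w = q by lia.
  exact: leq_trans take_pq_ge le_j.
have /andP[_ le_n] := sumn_take_bounds s_t j_n.
have : t * (q + (j - p - q - u)) + t * (p + q + u + w - j) = t * (q + w).
  by rewrite -mulnDr; congr (t * _); lia.
have -> : minn (j - p) q + minn (j - p - q - u) w = q + (j - p - q - u) by lia.
by rewrite take_oversize ?size_s // sum_s in le_n; lia.
Qed.

Lemma schubert4_lattice_seq p q u w t s : s \in bounded_seqs t (sumn [:: p; q; u; w]) ->
  schubert_lattice_seq (schubert_set [:: p; q; u; w]) t s =
  (sumn s == t * (q + w)) && (t * q <= sumn (take (p + q) s)).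
Proof.
have sumn_r : sumn [:: p; q; u; w] = p + q + u + w by rewrite /=; lia.
rewrite mem_bounded_seqs => /andP[/eqP size_s s_t]; rewrite sumn_r in size_s.
rewrite /schubert_lattice_seq card_schubert4.
apply/andP/andP => [[/eqP sum_s /allP prefix_ge] | [/eqP sum_s take_pq_ge]].
  split; first by rewrite sum_s.
  have := prefix_ge (p + q); rewrite prefix_card_schubert4 mem_iota sumn_r.
  have -> : minn (p + q - p) q + minn (p + q - p - q - u) w = q by lia.
  by apply; lia.
split; first by rewrite sum_s.
apply/allP => j; rewrite mem_iota add0n ltnS => /andP[_ j_n]; rewrite sumn_r in j_n.
by rewrite prefix_card_schubert4 schubert4_prefix_ge.
Qed.

Lemma i_r_four_blocks p q u w t : 0 < t ->
  i_r [:: p; q; u; w] t =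
  count (fun s => (sumn s == t * (q + w)) && (t * q <= sumn (take (p + q) s)))
        (bounded_seqs t (p + q + u + w)).
Proof.
move=> t_gt0; rewrite /i_r /matroid_ehrhart lattice_count_schubert //.
rewrite (eq_in_count (@schubert4_lattice_seq p q u w t)).
by have -> : sumn [:: p; q; u; w] = p + q + u + w by rewrite /=; lia.
Qed.

(** * Counting bounded sequences *)

Definition complement_seq t (s : seq nat) := map (fun v => t - v) s.

Lemma sumn_complement_seq t s : all (fun v => v <= t) s ->
  sumn (complement_seq t s) + sumn s = t * size s.
Proof.
elim: s => [|v s IH] /=; first by rewrite muln0.
by move=> /andP[vt s_t]; rewrite mulnS -(IH s_t) addnACA subnK.
Qed.

Lemma count_bounded_seqs_complement t n (P : pred (seq nat)) :
  count (fun s => P (complement_seq t s)) (bounded_seqs t n) = count P (bounded_seqs t n).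
Proof.
elim: n P => [|n IH] P //; rewrite !count_bounded_seqsS.
rewrite (eq_bigr (fun v : 'I_t.+1 => count (fun s => P ((t - v) :: s)) (bounded_seqs t n)))
  => [|v _]; last by rewrite -(IH (fun s => P ((t - v) :: s))).
rewrite (reindex_inj rev_ord_inj) /=; apply: eq_bigr => v _.
by rewrite subSS subKn // -ltnS.
Qed.

Lemma count_bool_andl T (b : bool) (P : pred T) l : count (fun s => b && P s) l = b * count P l.
Proof. by case: b; rewrite ?mul1n // mul0n (eq_count (a2 := pred0)) ?count_pred0. Qed.

Lemma addn_eq_sub v x M : (v + x == M) = (v <= M) && (x == M - v).
Proof.
apply/idP/idP => [/eqP <-|/andP[vM /eqP ->]]; first by rewrite leq_addr addKn eqxx.
by rewrite subnKC.
Qed.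

Definition bounded_compositions t m N := count (fun s => sumn s == N) (bounded_seqs t m).

Lemma bounded_compositions0 t N : bounded_compositions t 0 N = (N == 0).
Proof. by rewrite /bounded_compositions /= addn0 eq_sym. Qed.

Lemma bounded_compositionsS t m N :
  bounded_compositions t m.+1 N = \sum_(v < t.+1) (v <= N) * bounded_compositions t m (N - v).
Proof.
rewrite /bounded_compositions count_bounded_seqsS; apply: eq_bigr => v _.
by rewrite -count_bool_andl; apply: eq_count => s /=; rewrite addn_eq_sub.
Qed.

Lemma bounded_compositions1 t N : bounded_compositions t 1 N = (N <= t).
Proof.
rewrite bounded_compositionsS; under eq_bigr => v _ do rewrite bounded_compositions0.
have [Nt|tN] := leqP N t.
  rewrite (bigD1 (Ordinal (Nt : N < t.+1))) //= leqnn subnn big1 // => v /=.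
  rewrite -(inj_eq val_inj) /= => /negPf vN.
  by case: (leqP v N) => vN'; rewrite ?mul0n // subn_eq0 leqNgt ltn_neqAle vN vN'.
rewrite big1 // => v _.
by rewrite subn_eq0 (leqNgt N v) (leq_ltn_trans (ltnSE (ltn_ord v)) tN) muln0.
Qed.

Lemma count_bounded_seqs_split t p q M K :
  count (fun s => (sumn (take p s) == M) && (sumn (drop p s) == K)) (bounded_seqs t (p + q)) =
  bounded_compositions t p M * bounded_compositions t q K.
Proof.
elim: p M => [|p IH] M.
  rewrite add0n bounded_compositions0 -count_bool_andl eq_sym.
  by apply: eq_count => s; rewrite take0 drop0.
rewrite addSn count_bounded_seqsS bounded_compositionsS big_distrl /=.
apply: eq_bigr => v _; rewrite -mulnA -IH -count_bool_andl.
by apply: eq_count => s /=; rewrite addn_eq_sub andbA.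
Qed.

(* [M <= x] + [x <= M] = 1 + [x == M], and for a sequence of total [M + K] a
   prefix sum [x = M] means the remaining entries sum to [K]. *)
Lemma count_prefix_ge_add_le p M K (l : seq (seq nat)) :
  count (fun s => (sumn s == M + K) && (M <= sumn (take p s))) l +
  count (fun s => (sumn s == M + K) && (sumn (take p s) <= M)) l =
  count (fun s => sumn s == M + K) l +
  count (fun s => (sumn (take p s) == M) && (sumn (drop p s) == K)) l.
Proof.
elim: l => //= s l IH; rewrite addnACA IH [RHS]addnACA; congr (_ + _).
rewrite -[s in sumn s](cat_take_drop p) sumn_cat.
move: (sumn (take p s)) (sumn (drop p s)) => x y.
case: (ltngtP x M) => xM /=.
- by case: eqP => //; lia.
- by case: eqP => //; lia.
- by rewrite xM eqn_add2l addnn; case: (y == K).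
Qed.

Lemma count_prefix_ge_complement t p q M P : M <= t * (p + q) -> P <= t * p ->
  count (fun s => (sumn s == t * (p + q) - M) && (t * p - P <= sumn (take p s)))
        (bounded_seqs t (p + q)) =
  count (fun s => (sumn s == M) && (sumn (take p s) <= P)) (bounded_seqs t (p + q)).
Proof.
move=> M_le P_le; rewrite -count_bounded_seqs_complement; apply: eq_in_count => s.
rewrite mem_bounded_seqs => /andP[/eqP size_s s_t] /=.
have take_t : all (fun v => v <= t) (take p s).
  by apply/allP => v /mem_take; exact: (allP s_t).
have := sumn_complement_seq take_t; rewrite size_take size_s.
have -> : (if p < p + q then p else p + q) = p by case: ifP => //; lia.
have := sumn_complement_seq s_t; rewrite size_s /complement_seq -map_take.
move: M_le P_le; move: (sumn (map _ s)) (sumn (map _ (take p s))) (t * (p + q)) (t * p).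
move: (sumn s) (sumn (take p s)) => Z W X Y Tn Tp M_le P_le sumX sumY.
by apply/andP/andP => -[/eqP sum_eq take_le]; split; try apply/eqP; lia.
Qed.

Lemma i_r_swap_sum a b c d t : 0 < t ->
  i_r [:: a; b; c; d] t + i_r [:: b; a; d; c] t =
  bounded_compositions t (a + b + (c + d)) (t * (b + d)) +
  bounded_compositions t (a + b) (t * b) * bounded_compositions t (c + d) (t * d).
Proof.
move=> t_gt0; rewrite !i_r_four_blocks //.
have -> : b + a + d + c = a + b + (c + d) by lia.
have -> : a + b + c + d = a + b + (c + d) by lia.
have -> : t * (a + c) = t * (a + b + (c + d)) - t * (b + d) by rewrite -mulnBr; congr (t * _); lia.
have -> : t * a = t * (a + b) - t * b by rewrite -mulnBr; congr (t * _); lia.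
rewrite [b + a]addnC.
rewrite count_prefix_ge_complement; first last.
- by rewrite leq_mul2l leq_addl orbT.
- by rewrite leq_mul2l; apply/orP; right; lia.
by rewrite mulnDr count_prefix_ge_add_le -count_bounded_seqs_split.
Qed.

(** * The alternating sum [F] counts bounded compositions *)

Section AlternatingSum.
Local Open Scope ring_scope.

Lemma binz_small (N : int) K : N < K%:Z -> binz N K = 0.
Proof. by case: N => // k; rewrite ltz_nat => kK /=; rewrite bin_small. Qed.

Lemma binzS (M : int) K : binz (M + 1) K.+1 = binz M K.+1 + binz M K.
Proof.
have [M_lt0|] := ltrP M 0; first by rewrite !binz_small ?addr0 //; lia.
by case: M => // k _; rewrite -PoszD addn1 /= binS PoszD.
Qed.

Lemma sum_binz_sub (M : int) K t :
  \sum_(v < t.+1) binz (M - v%:Z) K = binz (M + 1) K.+1 - binz (M - t%:Z) K.+1.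
Proof.
elim: t => [|t IH]; first by rewrite big_ord1 /= subr0 binzS; lia.
rewrite big_ord_recr /= IH.
have := binzS (M - t.+1%:Z) K.
have -> : M - t.+1%:Z + 1 = M - t%:Z by lia.
lia.
Qed.

Lemma sum_binS_shift m (T : nat -> int) :
  \sum_(j < m.+2) 'C(m.+1, j)%:Z * T j =
  \sum_(j < m.+1) 'C(m, j)%:Z * T j + \sum_(j < m.+1) 'C(m, j)%:Z * T j.+1.
Proof.
rewrite big_ord_recl /= bin0.
rewrite (eq_bigr (fun j : 'I_m.+1 => 'C(m, j.+1)%:Z * T j.+1 + 'C(m, j)%:Z * T j.+1))
  => [|j _]; last by rewrite /bump leq0n add1n binS PoszD mulrDl.
rewrite big_split /= addrA; congr (_ + _).
rewrite [in RHS]big_ord_recl /= bin0; congr (_ + _).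
rewrite big_ord_recr /= bin_small // mul0r addr0.
by apply: eq_bigr => j _; rewrite /bump leq0n add1n.
Qed.

Definition incl_excl t m (N : int) : int :=
  \sum_(0 <= j < m.+1) (-1) ^+ j * 'C(m, j)%:Z *
     binz (N + m%:Z - 1 - (t.+1 * j)%N%:Z) m.-1.

Lemma incl_excl_neg t m (N : int) : N < 0 -> incl_excl t m.+1 N = 0.
Proof. by move=> N_lt0; rewrite /incl_excl big1 // => j _; rewrite binz_small ?mulr0 //=; lia. Qed.

Lemma incl_exclS t m (N : int) :
  incl_excl t m.+2 N = \sum_(v < t.+1) incl_excl t m.+1 (N - v%:Z).
Proof.
pose T j := (-1) ^+ j * binz (N + m.+1%:Z - (t.+1 * j)%N%:Z) m.+1.
transitivity (\sum_(j < m.+3) 'C(m.+2, j)%:Z * T j).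
  rewrite /incl_excl big_mkord; apply: eq_bigr => j _; rewrite /T -mulrA mulrCA.
  by congr (_ * (_ * binz _ _)); lia.
rewrite sum_binS_shift /incl_excl exchange_big /= big_mkord -big_split /=.
apply: eq_bigr => j _; rewrite -mulr_sumr.
rewrite (eq_bigr (fun v : 'I_t.+1 =>
    binz ((N + m.+1%:Z - 1 - (t.+1 * j)%N%:Z) - (v : nat)%:Z) m)) => [|v _]; last first.
  by congr binz; lia.
rewrite sum_binz_sub /T /= exprS.
have -> : N + m.+1%:Z - 1 - (t.+1 * j)%N%:Z + 1 = N + m.+1%:Z - (t.+1 * j)%N%:Z by lia.
have -> : N + m.+1%:Z - 1 - (t.+1 * j)%N%:Z - t%:Z = N + m.+1%:Z - (t.+1 * j.+1)%N%:Z.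
  by rewrite mulnS; lia.
by rewrite mulrBr; ring.
Qed.

Lemma incl_excl_compositions t m N :
  incl_excl t m.+1 N%:Z = (bounded_compositions t m.+1 N)%:Z.
Proof.
elim: m N => [|m IH] N.
  rewrite bounded_compositions1 /incl_excl big_mkord !big_ord_recl big_ord0 /=.
  rewrite addr0 expr0 expr1 !mul1r /bump /= binn mulr1 muln0 muln1.
  have -> : N%:Z + 1 - 1 - 0%N%:Z = N%:Z by lia.
  have -> : N%:Z + 1 - 1 - t.+1%:Z = N%:Z - t.+1%:Z by lia.
  have [Nt|tN] := leqP N t.
    by rewrite (binz_small (N := N%:Z - t.+1%:Z)) /=; [rewrite bin0 mulr0 addr0 | lia].
  have -> : N%:Z - t.+1%:Z = (N - t.+1)%N%:Z by rewrite subzn.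
  by rewrite /= !bin0 mulN1r subrr.
rewrite incl_exclS bounded_compositionsS -[in RHS]natz natr_sum.
apply: eq_bigr => v _; have [vN|Nv] := leqP v N.
  by rewrite subzn // IH mul1n natz.
by rewrite incl_excl_neg ?mul0n //; lia.
Qed.

Lemma F_bounded_compositions a b t : (0 < a)%N ->
  F a b 0 t = (bounded_compositions t (a + b) (t * b))%:Z.
Proof.
move=> a_gt0; have -> : F a b 0 t = incl_excl t (a + b) (t * b)%N%:Z.
  rewrite /F /incl_excl; apply: eq_bigr => j _; congr (_ * binz _ _).
  by rewrite !PoszM !PoszD !intS; ring.
have ab_gt0 : (0 < a + b)%N by rewrite addn_gt0 a_gt0.
by rewrite -(prednK ab_gt0) incl_excl_compositions.
Qed.

End AlternatingSum.

Theorem theorem4p2 (a b c d t : nat) :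
  (0 < a)%N -> (0 < b)%N -> (0 < c)%N -> (0 < d)%N -> (0 < t)%N ->
  ((i_r [:: a; b; c; d] t + i_r [:: b; a; d; c] t)%:Z =
   F (a + c) (b + d) 0 t + F a b 0 t * F c d 0 t)%R.
Proof.
move=> a_gt0 _ c_gt0 _ t_gt0.
rewrite i_r_swap_sum // !F_bounded_compositions ?addn_gt0 ?a_gt0 //.
by rewrite PoszD PoszM (_ : a + c + (b + d) = a + b + (c + d))%N //; lia.
Qed.
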